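(* Let $(P,\omega)$ be a labeled poset of size $p$ and let $s\in P$. Then, as formal power series in $q$, $$G_{P,\omega;s}(q)=\frac{e_q^{\mathrm{maj}}(P,\omega;s)}{\prod_{i=1}^{p}(1-q^i)}.$$
   Context: $\mathbb{N}=\{0,1,2,\dots\}$; $\omega:P\to[p]$ is a bijection. A $(P,\omega)$-partition is a map $f:P\to\mathbb{N}$ with $f(x)\ge f(y)$ whenever $x\le y$, and $f(x)>f(y)$ whenever $x\le y$ and $\omega(x)>\omega(y)$. A $(P,\omega;s)$-partition is a $(P,\omega)$-partition $f$ with $f(s)\le f(t)$ for all $t\in P$ and such that $f(s)=f(t)$, $t\ne s$, implies $\omega(s)>\omega(t)$. $G_{P,\omega;s}(q)=\sum_{m\ge0}a(m)q^m$, where $a(m)$ is the number of $(P,\omega;s)$-partitions $f$ with $\sum_{t\in P}f(t)=m$. For a linear extension (order-preserving bijection) $g:P\to[p]$, its word is $\sigma=\omega\circ g^{-1}=\sigma_1\cdots\sigma_p$, and $\mathrm{maj}(\sigma)=\sum_{i:\sigma_i>\sigma_{i+1}}i$. $e_q^{\mathrm{maj}}(P,\omega;s)=\sum q^{\mathrm{maj}(\sigma)}$, summed over words $\sigma$ of linear extensions with $\sigma_p=\omega(s)$. *)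

From mathcomp Require Import all_boot all_order all_algebra.
Set Implicit Arguments. Unset Strict Implicit. Unset Printing Implicit Defensive.
Import GRing.Theory.

Definition is_poset (T : finType) (le : rel T) : Prop :=
  reflexive le /\ antisymmetric le /\ transitive le.

Definition is_labeling (T : finType) (omega : T -> nat) : Prop :=
  injective omega /\ forall x, 1 <= omega x <= #|T|.

Definition is_Pw_partition (T : finType) (le : rel T) (omega : T -> nat)
  (f : T -> nat) : bool :=
  [forall x, forall y, le x y ==> (f y <= f x)] &&
  [forall x, forall y, (le x y && (omega y < omega x)) ==> (f y < f x)].

Definition is_Pws_partition (T : finType) (le : rel T) (omega : T -> nat)
  (s : T) (f : T -> nat) : bool :=
  [&& is_Pw_partition le omega f,
      [forall t, f s <= f t] &
      [forall t, ((t != s) && (f s == f t)) ==> (omega t < omega s)]].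

(* a(m): number of (P,omega;s)-partitions f with sum m. Such f takes values
   in {0..m}, so we count maps T -> 'I_m.+1. *)
Definition a_coef (T : finType) (le : rel T) (omega : T -> nat) (s : T)
  (m : nat) : nat :=
  #|[set f : {ffun T -> 'I_m.+1} |
      is_Pws_partition le omega s (fun x => nat_of_ord (f x)) &&
      (\sum_(x : T) nat_of_ord (f x) == m)]|.

(* linear extension g : P -> [p] (positions 0..p-1 here, i.e. g(x)+1 in [p]) *)
Definition is_linext (T : finType) (le : rel T) (g : {ffun T -> 'I_#|T|}) : bool :=
  injectiveb g && [forall x, forall y, le x y ==> (g x <= g y)].

(* word sigma = omega o g^{-1} as the sequence sigma_1 ... sigma_p *)
Definition word (T : finType) (omega : T -> nat) (g : {ffun T -> 'I_#|T|}) : seq nat :=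
  mkseq (fun i => if [pick x | nat_of_ord (g x) == i] is Some x then omega x else 0)
        #|T|.

(* maj(sigma) = sum of i (1-based) with sigma_i > sigma_{i+1} *)
Definition maj (sigma : seq nat) : nat :=
  \sum_(1 <= i < size sigma | nth 0 sigma i < nth 0 sigma i.-1) i.

Definition emaj (T : finType) (le : rel T) (omega : T -> nat) (s : T) : {poly int} :=
  \sum_(g : {ffun T -> 'I_#|T|} |
          is_linext le g && (nth 0 (word omega g) #|T|.-1 == omega s))
     'X^(maj (word omega g)).

Definition denom (p : nat) : {poly int} := \prod_(1 <= i < p.+1) (1 - 'X^i).

From mathcomp Require Import all_boot all_order all_algebra zify.
Import GRing.Theory.
Set Implicit Arguments. Unset Strict Implicit. Unset Printing Implicit Defensive.

(* Stanley's fundamental lemma.  A map f : P -> N determines the total order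
   [precedes f] on P: decreasing f-value, ties broken by increasing label.  The
   map f is a (P,omega;s)-partition exactly when this order is a linear extension
   of P ending at s.  Conversely, a linear extension g ending at s together with
   arbitrary multiplicities c_0, ..., c_(p-1) yields the (P,omega;s)-partition
   f(x) = sum_(j >= g x) (c_j + [g has a descent at j]), whose sort order is g;
   this is a bijection, and |f| = maj(g) + sum_j (j+1) c_j.  Hence
   G = e^maj * prod_i 1/(1 - q^i).  Coefficientwise, the geometric series may be
   truncated at multiplicity m+1, because
   prod_i (1 + q^i + ... + q^(i m)) (1 - q^i) = 1 mod q^(m+1). *)

Section GeneratingPolynomials.
Local Open Scope ring_scope.

Lemma coef_mul_prod_1subXn (R : comNzRingType) (I : Type) (r : seq I) (P : pred I)
    (n : I -> nat) (q : {poly R}) i :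
  (forall j, P j -> (i < n j)%N) ->
  (q * \prod_(j <- r | P j) (1 - 'X^(n j)))`_i = q`_i.
Proof.
move=> lt_i; elim/big_rec: _ => [|j Q Pj IHQ]; first by rewrite mulr1.
by rewrite mulrBl mul1r mulrBr mulrCA coefB coefXnM lt_i // subr0.
Qed.

Definition wsum (p B : nat) (d : {ffun 'I_p -> 'I_B}) : nat := \sum_(j < p) j.+1 * d j.

Definition gen_parts (p B : nat) : {poly int} :=
  \prod_(j < p) \sum_(c < B) 'X^(j.+1 * c).

Lemma gen_partsE p B : gen_parts p B = \sum_(d : {ffun 'I_p -> 'I_B}) 'X^(wsum d).
Proof.
by rewrite /gen_parts bigA_distr_bigA; apply: eq_bigr => d _; rewrite -prodrXr.
Qed.

Lemma gen_parts_denom p B :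
  gen_parts p B * denom p = \prod_(j < p) (1 - 'X^(j.+1 * B)).
Proof.
rewrite /gen_parts /denom big_add1 big_mkord -big_split /=; apply: eq_bigr => j _.
have := subrXX 1 ('X^(j.+1) : {poly int}) B; rewrite !expr1n -exprM => ->.
by rewrite mulrC; congr (_ * _); apply: eq_bigr => c _; rewrite expr1n mul1r -exprM.
Qed.

End GeneratingPolynomials.

Lemma sum_suffix_sums n (c : nat -> nat) :
  \sum_(0 <= i < n) \sum_(i <= j < n) c j = \sum_(0 <= j < n) j.+1 * c j.
Proof.
elim: n => [|n IHn]; first by rewrite !big_geq.
rewrite big_nat_recr //= big_nat1 [RHS]big_nat_recr //= -IHn.
rewrite (@eq_big_nat _ _ _ 0 n _ (fun i => \sum_(i <= j < n) c j + c n)) => [|i /andP[_ lt_in]].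
  by rewrite big_split /= sum_nat_const_nat subn0 mulSn -addnA [n * _ + _]addnC.
by rewrite big_nat_recr //= ltnW.
Qed.

Lemma sum_nat_ltn p n : \sum_(0 <= i < p) (i < n) = minn p n.
Proof.
elim: p => [|p IHp]; first by rewrite big_geq // min0n.
by rewrite big_nat_recr //= IHp; case: (ltnP p n) => ?; lia.
Qed.

Lemma leq_term_sum (I : finType) (F : I -> nat) i : F i <= \sum_j F j.
Proof. by rewrite (bigD1 i) //= leq_addr. Qed.

Section StanleyBijection.
Variables (T : finType) (le : rel T) (omega : T -> nat) (s : T).
Hypothesis omega_inj : injective omega.
Local Notation p := #|T|.
Local Notation gT := {ffun T -> 'I_#|T|}.

Lemma card_T_gt0 : 0 < p.
Proof. by apply/card_gt0P; exists s. Qed.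

Definition precedes (F : T -> nat) (x y : T) : bool :=
  (F y < F x) || ((F x == F y) && (omega x < omega y)).

Lemma precedes_irr F x : precedes F x x = false.
Proof. by rewrite /precedes ltnn eqxx ltnn. Qed.

Lemma precedes_trans F x y z : precedes F x y -> precedes F y z -> precedes F x z.
Proof. by rewrite /precedes; lia. Qed.

Lemma precedes_total F x y : x != y -> precedes F x y || precedes F y x.
Proof.
move=> ne_xy; have : omega x != omega y by apply: contra ne_xy => /eqP/omega_inj->.
by rewrite /precedes; lia.
Qed.

Lemma eq_precedes F F' : F =1 F' -> precedes F =2 precedes F'.
Proof. by move=> eF x y; rewrite /precedes !eF. Qed.

Lemma Pws_partitionP f :
  reflect ((forall x y, x != y -> le x y -> precedes f x y) /\
           (forall t, t != s -> precedes f t s))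
          (is_Pws_partition le omega s f).
Proof.
rewrite /is_Pws_partition /is_Pw_partition /precedes.
apply: (iffP and3P) => [[/andP[mono strict] min_s tie_s]|[ext last]].
  split=> [x y ne_xy le_xy|t ne_ts].
    have := implyP (forallP (forallP mono x) y) le_xy.
    have := implyP (forallP (forallP strict x) y); rewrite le_xy /=.
    have : omega x != omega y by apply: contra ne_xy => /eqP/omega_inj->.
    lia.
  have := forallP min_s t; have := implyP (forallP tie_s t); rewrite ne_ts /=; lia.
split; [apply/andP; split | |]; apply/forallP => x.
- apply/forallP => y; apply/implyP => le_xy.
  case: (eqVneq x y) => [->//|ne_xy]; have := ext x y ne_xy le_xy; lia.
- apply/forallP => y; apply/implyP => /andP[le_xy lt_w].
  case: (eqVneq x y) lt_w => [->|ne_xy]; first by rewrite ltnn.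
  by have := ext x y ne_xy le_xy; lia.
- case: (eqVneq x s) => [->//|ne_xs]; have := last x ne_xs; lia.
- apply/implyP => /andP[ne_xs]; have := last x ne_xs; lia.
Qed.

Lemma Pws_partition_eq f f' : f =1 f' ->
  is_Pws_partition le omega s f -> is_Pws_partition le omega s f'.
Proof.
move=> /eq_precedes eF /Pws_partitionP[ext last]; apply/Pws_partitionP.
by split=> [x y|t]; rewrite -eF; [apply: ext | apply: last].
Qed.

Definition rank (F : T -> nat) (x : T) : nat := #|[set y | precedes F y x]|.

Lemma rank_lt_card F x : rank F x < p.
Proof.
have sub : [set y | precedes F y x] \subset [set~ x].
  by apply/subsetP => y; rewrite !inE; apply: contraTneq => ->; rewrite precedes_irr.
by rewrite (leq_ltn_trans (subset_leq_card sub)) // cardsC1 ltn_predL card_T_gt0.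
Qed.

Lemma rank_mono F x y : precedes F x y -> rank F x < rank F y.
Proof.
move=> xy; apply: proper_card; apply/properP; split.
  by apply/subsetP => z; rewrite !inE => /precedes_trans; apply.
by exists x; rewrite !inE ?precedes_irr.
Qed.

Lemma ltn_rank F x y : (rank F x < rank F y) = precedes F x y.
Proof.
apply/idP/idP => [lt_r|/rank_mono //]; case: (eqVneq x y) lt_r => [->|/(precedes_total F)].
  by rewrite ltnn.
by case/orP=> // /rank_mono lt_r' lt_r; move: (ltn_trans lt_r lt_r'); rewrite ltnn.
Qed.

Lemma rank_inj F : injective (rank F).
Proof.
move=> x y eq_r; apply/eqP; apply: contraT => /(precedes_total F).
by rewrite -!ltn_rank eq_r ltnn.
Qed.

Lemma eq_rank F F' : F =1 F' -> rank F =1 rank F'.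
Proof. by move=> /eq_precedes eF x; apply: eq_card => y; rewrite !inE eF. Qed.

Definition elt_at (g : gT) (j : nat) : T := odflt s [pick x | g x == j :> nat].

Definition descent (g : gT) (j : nat) : bool :=
  (j.+1 < p) && (nth 0 (word omega g) j.+1 < nth 0 (word omega g) j).

Lemma majE g : maj (word omega g) = \sum_(0 <= j < p) j.+1 * descent g j.
Proof.
rewrite /maj size_mkseq big_add1 -{2}(prednK card_T_gt0) big_nat_recr //=.
rewrite {2}/descent prednK ?card_T_gt0 // ltnn muln0 addn0 big_mkcond /=.
apply: eq_big_nat => j /andP[_ lt_j]; rewrite /descent -ltn_predRL lt_j /=.
by case: (_ < _); rewrite ?muln1 ?muln0.
Qed.

Section Positions.
Variable g : gT.
Hypothesis g_inj : injective g.

Lemma g_elt_at j : j < p -> g (elt_at g j) = j :> nat.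
Proof.
move=> lt_jp; have [h gK hK] := inj_card_bij g_inj (eq_leq (card_ord p)).
rewrite /elt_at; case: pickP => [x /eqP //|/(_ (h (Ordinal lt_jp)))].
by rewrite hK eqxx.
Qed.

Lemma elt_atK : cancel g (elt_at g).
Proof. by move=> x; apply: g_inj; apply: val_inj; rewrite /= g_elt_at. Qed.

Lemma nth_word j : j < p -> nth 0 (word omega g) j = omega (elt_at g j).
Proof.
move=> lt_jp; have := g_elt_at lt_jp; rewrite /word nth_mkseq // /elt_at.
by case: pickP => [//|/(_ s) /= + eq_sj]; rewrite eq_sj eqxx.
Qed.

Lemma nth_word_g x : nth 0 (word omega g) (g x) = omega x.
Proof. by rewrite nth_word // elt_atK. Qed.

Lemma sum_positions (F : nat -> nat) : \sum_x F (g x) = \sum_(0 <= i < p) F i.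
Proof.
by rewrite big_mkord (reindex g) //; apply/onW_bij/(inj_card_bij g_inj)/eq_leq/card_ord.
Qed.

Lemma card_positions_lt n : n <= p -> #|[set x | g x < n]| = n.
Proof.
move=> le_np; rewrite -sum1_card big_mkcond /=.
rewrite (eq_bigr (fun x => nat_of_bool (g x < n))) => [|x _]; last by rewrite inE; case: ifP.
by rewrite (sum_positions (fun i => nat_of_bool (i < n))) sum_nat_ltn; apply/minn_idPr.
Qed.

End Positions.

Section Level.
Variables (g : gT) (c : nat -> nat).

Definition level (i : nat) : nat := \sum_(i <= j < p) (c j + descent g j).

Lemma levelS i : i < p -> level i = c i + descent g i + level i.+1.
Proof. by move=> lt_ip; rewrite /level big_ltn. Qed.

Lemma level_ge i : p <= i -> level i = 0.
Proof. by move=> le_pi; rewrite /level big_geq. Qed.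

Lemma leq_level i j : i <= j -> level j <= level i.
Proof.
move=> le_ij; case: (leqP j p) => [le_jp|/ltnW lt_pj]; last by rewrite level_ge.
by rewrite /level (big_cat_nat le_ij le_jp) /= leq_addl.
Qed.

Lemma level_eq_word_le i j : i <= j < p -> level i = level j ->
  nth 0 (word omega g) i <= nth 0 (word omega g) j.
Proof.
elim: j => [|j IHj] /andP[le_ij lt_jp] eq_ij; first by case: i le_ij {eq_ij}.
case: (eqVneq i j.+1) => [->//|ne_ij].
have le_ij' : i <= j by rewrite -ltnS ltn_neqAle ne_ij.
have lt_j : j < p := ltnW lt_jp.
have eq_jj : level j = level j.+1.
  by have := leq_level (leqnSn j); have := leq_level le_ij'; rewrite eq_ij; lia.
have no_descent : descent g j = false.
  by move: (levelS lt_j); rewrite eq_jj; case: (descent g j) => //=; lia.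
apply: (@leq_trans (nth 0 (word omega g) j)); first by rewrite IHj ?le_ij' // eq_ij eq_jj.
by move: no_descent; rewrite /descent lt_jp /= => /negbT; rewrite -leqNgt.
Qed.

Lemma sum_level : injective g ->
  \sum_x level (g x) = maj (word omega g) + \sum_(0 <= j < p) j.+1 * c j.
Proof.
move=> g_inj; rewrite (sum_positions g_inj level) /level sum_suffix_sums majE -big_split /=.
by apply: eq_bigr => j _; rewrite mulnDr addnC.
Qed.

End Level.
Lemma eq_level g c c' i : (forall j, j < p -> c j = c' j) -> level g c i = level g c' i.
Proof. by move=> eq_c; apply: eq_big_nat => j /andP[_ lt_jp]; rewrite eq_c. Qed.

Definition is_linext_last (g : gT) : bool :=
  is_linext le g && (nth 0 (word omega g) p.-1 == omega s).

Section LinearExtension.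
Variable g : gT.
Hypothesis g_last : is_linext_last g.

Lemma is_linext_last_inj : injective g.
Proof. by case/andP: g_last => /andP[/injectiveP]. Qed.

Lemma is_linext_last_le x y : le x y -> g x <= g y.
Proof. by case/andP: g_last => /andP[_ /forallP/(_ x)/forallP/(_ y)/implyP]. Qed.

Lemma is_linext_last_s : g s = p.-1 :> nat.
Proof.
have lt_p : p.-1 < p by rewrite ltn_predL card_T_gt0.
case/andP: g_last => _ /eqP; rewrite nth_word //; last exact: is_linext_last_inj.
by move/omega_inj <-; rewrite g_elt_at //; exact: is_linext_last_inj.
Qed.

Variable c : nat -> nat.
Local Notation F := (fun x => level g c (g x)).

Lemma precedes_level x y : precedes F x y = (g x < g y).
Proof.
have g_inj := is_linext_last_inj.
suff lt_prec u v : g u < g v -> precedes F u v.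
  case: (ltngtP (g x) (g y)) => [/lt_prec //|/lt_prec|/val_inj/g_inj->].
    by rewrite /precedes; lia.
  by rewrite precedes_irr.
move=> lt_uv; rewrite /precedes; case: ltngtP (leq_level g c (ltnW lt_uv)) => // eq_l _.
have le_uv : g u <= g v < p by rewrite (ltnW lt_uv) ltn_ord.
have := level_eq_word_le le_uv (esym eq_l).
rewrite !nth_word_g // leq_eqVlt => /orP[/eqP/omega_inj eq_uv|->//].
by move: lt_uv; rewrite eq_uv ltnn.
Qed.

Lemma rank_level x : rank F x = g x.
Proof.
rewrite -[RHS](card_positions_lt is_linext_last_inj (ltnW (ltn_ord (g x)))).
by apply: eq_card => y; rewrite !inE precedes_level.
Qed.

Lemma level_Pws_partition : is_Pws_partition le omega s F.
Proof.
have g_inj := is_linext_last_inj.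
apply/Pws_partitionP; split=> [x y ne_xy le_xy|t ne_ts]; rewrite precedes_level.
  by rewrite ltn_neqAle (inj_eq val_inj) (inj_eq g_inj) ne_xy is_linext_last_le.
rewrite ltn_neqAle (inj_eq val_inj) (inj_eq g_inj) ne_ts is_linext_last_s.
by rewrite -ltnS prednK ?card_T_gt0 /=.
Qed.

End LinearExtension.

Definition sort_linext (f : T -> nat) : gT := [ffun x => Ordinal (rank_lt_card f x)].

Section SortedPartition.
Variable f : T -> nat.
Hypothesis f_Pws : is_Pws_partition le omega s f.
Local Notation g := (sort_linext f).

Lemma sort_linextE x : g x = rank f x :> nat.
Proof. by rewrite ffunE. Qed.

Lemma sort_linext_inj : injective g.
Proof. by move=> x y /(congr1 val); rewrite /= !sort_linextE => /rank_inj. Qed.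

Lemma sort_linext_last : is_linext_last g.
Proof.
case/Pws_partitionP: f_Pws => ext last.
apply/andP; split.
  apply/andP; split; first exact/injectiveP/sort_linext_inj.
  apply/forallP => x; apply/forallP => y; apply/implyP => le_xy.
  rewrite !sort_linextE; case: (eqVneq x y) => [->//|ne_xy].
  by rewrite ltnW // ltn_rank ext.
have rank_s : rank f s = p.-1.
  rewrite -(cardsC1 s); apply: eq_card => y; rewrite !inE.
  by case: (eqVneq y s) => [->|/last ->]; rewrite ?precedes_irr.
rewrite (nth_word sort_linext_inj) ?ltn_predL ?card_T_gt0 //.
by rewrite -rank_s -sort_linextE elt_atK //; exact: sort_linext_inj.
Qed.

Definition height (i : nat) : nat := if i < p then f (elt_at g i) else 0.

Definition jumps (j : nat) : nat := height j - height j.+1 - descent g j.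

Lemma height_step i : i < p -> height i.+1 + descent g i <= height i.
Proof.
move=> lt_ip; rewrite /descent /height lt_ip.
case: (ltnP i.+1 p) => [lt_i1p|]; last by rewrite addn0.
rewrite /= !(nth_word sort_linext_inj) //.
have : precedes f (elt_at g i) (elt_at g i.+1).
  by rewrite -ltn_rank -!sort_linextE !(g_elt_at sort_linext_inj).
by rewrite /precedes; lia.
Qed.

Lemma level_jumps i : level g jumps i = height i.
Proof.
have [n] := ubnP (p - i); elim: n i => // n IHn i lt_n.
case: (ltnP i p) => [lt_ip|le_pi]; last by rewrite level_ge // /height ltnNge le_pi.
rewrite levelS // IHn; last by lia.
by have := height_step lt_ip; rewrite /jumps; lia.
Qed.

Lemma level_sort x : level g jumps (g x) = f x.
Proof. by rewrite level_jumps /height ltn_ord elt_atK //; exact: sort_linext_inj. Qed.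

Lemma jumps_le_sum j : jumps j <= \sum_x f x.
Proof.
do 2 apply: leq_trans (leq_subr _ _) _.
by rewrite /height; case: ifP => // _; apply: leq_term_sum.
Qed.

End SortedPartition.

Definition mult_at B (d : {ffun 'I_p -> 'I_B}) (j : nat) : nat :=
  oapp (fun i : 'I_p => nat_of_ord (d i)) 0 (insub j).

Lemma mult_atE B (d : {ffun 'I_p -> 'I_B}) (i : 'I_p) : mult_at d i = d i.
Proof. by rewrite /mult_at valK. Qed.

Lemma wsumE B (d : {ffun 'I_p -> 'I_B}) : wsum d = \sum_(0 <= j < p) j.+1 * mult_at d j.
Proof. by rewrite /wsum big_mkord; apply: eq_bigr => i _; rewrite mult_atE. Qed.

Section Count.
Variables k n : nat.
Hypothesis le_kn : k <= n.
Local Notation dT := {ffun 'I_p -> 'I_n.+1}.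

Definition Pws_partitions : {set {ffun T -> 'I_k.+1}} :=
  [set f : {ffun T -> 'I_k.+1} | is_Pws_partition le omega s (fun x => nat_of_ord (f x))
                                 && (\sum_(x : T) nat_of_ord (f x) == k)].

Definition linext_mults : {set gT * dT} :=
  [set gd | is_linext_last gd.1 && (maj (word omega gd.1) + wsum gd.2 == k)].

Definition level_partition (gd : gT * dT) : {ffun T -> 'I_k.+1} :=
  [ffun x => inord (level gd.1 (mult_at gd.2) (gd.1 x))].

Lemma level_partitionE g d x : (g, d) \in linext_mults ->
  level_partition (g, d) x = level g (mult_at d) (g x) :> nat.
Proof.
rewrite inE => /andP[/is_linext_last_inj g_inj /eqP sum_k].
rewrite ffunE inordK // ltnS -sum_k wsumE -(sum_level _ g_inj).
exact: (leq_term_sum (fun y => level g (mult_at d) (g y))).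
Qed.

Lemma level_partition_in g d : (g, d) \in linext_mults ->
  level_partition (g, d) \in Pws_partitions.
Proof.
move=> gd_in; have := gd_in; rewrite !inE => /andP[g_last /eqP sum_k].
rewrite (Pws_partition_eq (fun x => esym (level_partitionE x gd_in))
                          (level_Pws_partition g_last _)) /=.
rewrite (eq_bigr _ (fun x _ => level_partitionE x gd_in)).
by rewrite (sum_level _ (is_linext_last_inj g_last)) -wsumE sum_k.
Qed.

Lemma level_partition_inj : {in linext_mults &, injective level_partition}.
Proof.
move=> [g d] [g' d'] gd_in gd'_in eq_f.
have eq_lev x : level g (mult_at d) (g x) = level g' (mult_at d') (g' x).
  by rewrite -(level_partitionE x gd_in) -(level_partitionE x gd'_in) eq_f.
have [g_last g'_last] : is_linext_last g /\ is_linext_last g'.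
  by move: gd_in gd'_in; rewrite !inE => /andP[-> _] /andP[-> _].
have eq_g : g = g'.
  apply/ffunP => x; apply: val_inj.
  rewrite /= -(rank_level g_last (mult_at d)) -(rank_level g'_last (mult_at d')).
  exact: eq_rank.
subst g'; congr pair; apply/ffunP => i; apply: val_inj.
have eq_lev_at j : level g (mult_at d) j = level g (mult_at d') j.
  case: (ltnP j p) => [lt_jp|le_pj]; last by rewrite !level_ge.
  by have := eq_lev (elt_at g j); rewrite (g_elt_at (is_linext_last_inj g_last)).
have := eq_lev_at i; rewrite (levelS g (mult_at d) (ltn_ord i)).
rewrite (levelS g (mult_at d') (ltn_ord i)) eq_lev_at => /eqP.
by rewrite !eqn_add2r !mult_atE => /eqP.
Qed.

Section Surjective.
Variable f : {ffun T -> 'I_k.+1}.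
Hypothesis f_in : f \in Pws_partitions.
Local Notation F := (fun x => nat_of_ord (f x)).

Definition sort_mults : dT := [ffun i : 'I_p => inord (jumps F i)].

Lemma mult_at_sort_mults j : j < p -> mult_at sort_mults j = jumps F j.
Proof.
move: f_in; rewrite inE => /andP[_ /eqP sum_k] lt_jp.
rewrite -[j]/(val (Ordinal lt_jp)) mult_atE ffunE inordK // ltnS.
by rewrite (leq_trans (jumps_le_sum F j)) // sum_k.
Qed.

Lemma sort_in : (sort_linext F, sort_mults) \in linext_mults.
Proof.
move: f_in; rewrite !inE => /andP[F_Pws /eqP sum_k].
rewrite sort_linext_last //= wsumE -(sum_level _ (@sort_linext_inj F)).
apply/eqP; apply: etrans sum_k; apply: eq_bigr => x _.
by rewrite (eq_level _ _ mult_at_sort_mults) level_sort.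
Qed.

Lemma level_partition_sort : level_partition (sort_linext F, sort_mults) = f.
Proof.
move: f_in; rewrite inE => /andP[F_Pws _].
apply/ffunP => x; apply: val_inj.
by rewrite /= level_partitionE ?sort_in // (eq_level _ _ mult_at_sort_mults) level_sort.
Qed.

End Surjective.

Lemma a_coef_card : a_coef le omega s k = #|linext_mults|.
Proof.
rewrite -(card_in_imset level_partition_inj); apply: eq_card => f.
apply/idP/imsetP => [f_in|[[g d] gd_in ->]]; last exact: level_partition_in.
by exists (sort_linext (fun x => nat_of_ord (f x)), sort_mults f);
  [apply: sort_in | rewrite level_partition_sort].
Qed.

Lemma a_coef_linext : a_coef le omega s k =
  \sum_(g | is_linext_last g) #|[set d : dT | maj (word omega g) + wsum d == k]|.
Proof.
rewrite a_coef_card /linext_mults -sum1dep_card.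
rewrite -(pair_big_dep is_linext_last (fun g d => maj (word omega g) + wsum d == k)
                       (fun _ _ => 1)) /=.
by apply: eq_bigr => g _; apply: sum1dep_card.
Qed.

End Count.
End StanleyBijection.

Local Open Scope ring_scope.

Lemma coef_emaj_gen_parts (T : finType) (le : rel T) (omega : T -> nat) (s : T) B k :
  (emaj le omega s * gen_parts #|T| B)`_k =
  (\sum_(g | is_linext_last le omega s g)
     #|[set d : {ffun 'I_#|T| -> 'I_B} | maj (word omega g) + wsum d == k]|)%:R.
Proof.
rewrite /emaj gen_partsE big_distrl coef_sum natr_sum; apply: eq_bigr => g _.
rewrite big_distrr coef_sum -sum1dep_card natr_sum [RHS]big_mkcond /=.
by apply: eq_bigr => d _; rewrite -exprD coefXn eq_sym; case: eqP.
Qed.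

Theorem theorem3p3 (T : finType) (le : rel T) (omega : T -> nat) (s : T) :
  is_poset le -> is_labeling omega ->
  forall m : nat,
    \sum_(k < m.+1) ((a_coef le omega s k)%:R * (denom #|T|)`_(m - k)%N)
      = (emaj le omega s)`_m.
Proof.
move=> _ [omega_inj _] m.
have a_coefE (k : 'I_m.+1) :
    (a_coef le omega s k)%:R = (emaj le omega s * gen_parts #|T| m.+1)`_k.
  have le_km : (k <= m)%N by rewrite -ltnS.
  by rewrite coef_emaj_gen_parts (a_coef_linext le s omega_inj le_km).
under eq_bigr => k _ do rewrite a_coefE.
rewrite -coefM.
rewrite -mulrA gen_parts_denom coef_mul_prod_1subXn // => j _.
by rewrite mulSn ltn_addr.
Qed.
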